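(* Let $R$ be a finite (associative, not necessarily unital) ring. (i) There exists $t\ge1$ such that $x^t=x^{2t}$ for all $x$ in $(R,\cdot)$, and there exists $t\ge1$ such that the $t$-th power of every element of $(R,\circ)$ equals its $2t$-th power in $(R,\circ)$. (ii) If all idempotents of $R$ are central, then $(R,\cdot)$ satisfies a reduced semigroup identity.
   Context: $(R,\circ)$ is $R$ with the operation $x\circ y=x+y+xy$ (powers in part (i) for $(R,\circ)$ are taken with respect to $\circ$). A semigroup identity is $u=v$ with $u\ne v$ words in a free semigroup holding under all substitutions; it is reduced if the first letters of $u,v$ differ and the last letters of $u,v$ differ. *)

From HB Require Import structures.
From mathcomp Require Import all_boot all_order all_algebra.
Set Implicit Arguments. Unset Strict Implicit. Unset Printing Implicit Defensive.
Import GRing.Theory.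
Local Open Scope ring_scope.

Definition is_rng (R : zmodType) (mul : R -> R -> R) : Prop :=
  [/\ forall x y z, mul x (mul y z) = mul (mul x y) z,
      forall x y z, mul x (y + z) = mul x y + mul x z &
      forall x y z, mul (x + y) z = mul x z + mul y z].

Definition circ (R : zmodType) (mul : R -> R -> R) (x y : R) : R :=
  x + y + mul x y.

(* Semigroup power: spow op x n = x^n (x op x op ... op x, n factors),
   meaningful for n >= 1. *)
Definition spow (T : Type) (op : T -> T -> T) (x : T) (n : nat) : T :=
  iter n.-1 (fun y => op y x) x.

(* Words of the free semigroup on variables indexed by nat: nonempty
   sequences of variables.  Evaluation under a substitution f. *)
Definition weval (T : Type) (op : T -> T -> T) (f : nat -> T) (w : seq nat) : T :=
  match w with
  | [::] => f 0%N (* unused: words are nonempty *)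
  | a :: w' => foldl (fun acc b => op acc (f b)) (f a) w'
  end.

Definition semigroup_identity (T : Type) (op : T -> T -> T) (u v : seq nat) : Prop :=
  [/\ u != [::], v != [::], u != v &
      forall f : nat -> T, weval op f u = weval op f v].

Definition reduced (u v : seq nat) : Prop :=
  head 0%N u != head 0%N v /\ last 0%N u != last 0%N v.

From HB Require Import structures.
From mathcomp Require Import all_boot all_order all_algebra.
Set Implicit Arguments. Unset Strict Implicit.

(* In a finite set every orbit of a map is eventually periodic with period at
   most the cardinality, so iterating right multiplication by x shows that
   x^t = x^(2t) for t = (|R| + 1)!; this needs no associativity, hence holds
   for (R, o) as well.  In an associative finite ring e = x^t is then an
   idempotent, and if idempotents are central then x^t y^t = y^t x^t, an
   identity whose two sides differ at both ends. *)

Lemma iter_preperiod (T : finType) (f : T -> T) (x : T) :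
  exists a p, [/\ 0 < p, a + p <= #|T| & iter (a + p) f x = iter a f x].
Proof.
have /trajectP [a lt_a_ord loop_a] := looping_order f x.
exists a, (order f x - a); rewrite subn_gt0 subnKC ?(ltnW lt_a_ord) //.
by split=> //; apply: max_card.
Qed.

Lemma iterD_period (T : Type) (f : T -> T) (x : T) a p n m :
  iter (a + p) f x = iter a f x -> a <= n -> p %| m ->
  iter (n + m) f x = iter n f x.
Proof.
move=> period_p le_an /dvdnP [k ->].
have fix_p : iter p f (iter a f x) = iter a f x by rewrite -iterD addnC.
rewrite -(subnK le_an) -addnA [a + _]addnC !iterD (iterM k p).
by rewrite (iter_fix _ fix_p).
Qed.

Lemma iterD_fact (T : finType) (f : T -> T) (x : T) n m :
  #|T| <= n -> #|T|`! %| m -> iter (n + m) f x = iter n f x.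
Proof.
move=> le_Tn dvd_m; have [a [p [p_gt0 le_apT period_p]]] := iter_preperiod f x.
apply: (iterD_period period_p).
  by apply: leq_trans le_Tn; apply: leq_trans le_apT; apply: leq_addr.
apply: dvdn_trans dvd_m; apply: dvdn_fact.
by rewrite p_gt0; apply: leq_trans le_apT; apply: leq_addl.
Qed.

Lemma spow_fact_double (T : finType) (op : T -> T -> T) (x : T) :
  spow op x (#|T|.+1)`! = spow op x (2 * (#|T|.+1)`!).
Proof.
set t := (#|T|.+1)`!.
have t_gt0 : 0 < t := fact_gt0 _.
rewrite /spow; have -> : (2 * t).-1 = t.-1 + t.
  by rewrite mul2n -addnn -{1}(prednK t_gt0) addSn.
rewrite iterD_fact ?factS ?dvdn_mull //.
by rewrite -ltnS prednK // fact_geq.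
Qed.

Lemma finite_spow_idempotent_exponent (T : finType) (op : T -> T -> T) :
  exists2 t : nat, 1 <= t & forall x : T, spow op x t = spow op x (2 * t).
Proof. by exists (#|T|.+1)`!; [exact: fact_gt0 | exact: spow_fact_double]. Qed.

Section AssociativePowers.

Variables (T : Type) (op : T -> T -> T).
Hypothesis opA : associative op.

Lemma iter_mulr_spow (x z : T) n :
  iter n.+1 (fun y => op y x) z = op z (spow op x n.+1).
Proof. by elim: n => [|n IHn] //; rewrite iterS IHn /spow /= opA. Qed.

Lemma spowD (x : T) m n : 0 < m -> 0 < n ->
  spow op x (m + n) = op (spow op x m) (spow op x n).
Proof.
case: m => // m _; case: n => // n _.
by rewrite -iter_mulr_spow /spow addSn addnC iterD.
Qed.

Lemma foldl_nseq (f : nat -> T) (z : T) n b :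
  foldl (fun acc c => op acc (f c)) z (nseq n b) = iter n (fun y => op y (f b)) z.
Proof. by elim: n z => [|n IHn] z //; rewrite iterSr -IHn. Qed.

Lemma weval_nseq_cat (f : nat -> T) a b m n : 0 < m -> 0 < n ->
  weval op f (nseq m a ++ nseq n b) = op (spow op (f a) m) (spow op (f b) n).
Proof.
case: m => // m _; case: n => // n _.
rewrite /weval /= foldl_cat foldl_nseq -[b :: _]/(nseq n.+1 b).
by rewrite foldl_nseq iter_mulr_spow.
Qed.

Lemma spow_identity_of_central_idempotents t :
  0 < t -> (forall x, spow op x t = spow op x (2 * t)) ->
  (forall e, op e e = e -> forall x, op e x = op x e) ->
  semigroup_identity op (nseq t 0 ++ nseq t 1) (nseq t 1 ++ nseq t 0).
Proof.
case: t => // s _ idem_t central; split => // f.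
rewrite !weval_nseq_cat //; apply: central.
by rewrite -spowD // addnn -mul2n -idem_t.
Qed.

End AssociativePowers.

Lemma last_nseq (x b : nat) n : 0 < n -> last x (nseq n b) = b.
Proof. by case: n => // n _; rewrite -addn1 nseqD cats1 last_rcons. Qed.

Lemma reduced_nseq_swap t : 0 < t ->
  reduced (nseq t 0 ++ nseq t 1) (nseq t 1 ++ nseq t 0).
Proof. by case: t => // s _; rewrite /reduced !last_cat !last_nseq. Qed.

Theorem proposition4p1 (R : finZmodType) (mul : R -> R -> R) (Hmul : is_rng mul) :
  ((exists2 t : nat, (1 <= t)%N & forall x : R, spow mul x t = spow mul x (2 * t))
   /\ (exists2 t : nat, (1 <= t)%N &
         forall x : R, spow (circ mul) x t = spow (circ mul) x (2 * t)))
  /\ ((forall e : R, mul e e = e -> forall x : R, mul e x = mul x e) ->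
      exists u v : seq nat, semigroup_identity mul u v /\ reduced u v).
Proof.
split; first by split; apply: finite_spow_idempotent_exponent.
move=> central; have [mulA _ _] := Hmul.
have [t t_gt0 idem_t] := finite_spow_idempotent_exponent mul.
exists (nseq t 0 ++ nseq t 1), (nseq t 1 ++ nseq t 0); split.
  exact: spow_identity_of_central_idempotents.
exact: reduced_nseq_swap.
Qed.
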